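(* Let $\vec{\alpha}=\langle\alpha_s:s\in[\mathbb{N}]^{<\infty}\rangle$ be a sequence of nonstandard hypernatural numbers. If $T$ and $S$ are $\vec{\alpha}$-trees, then $S\cap T$ is an $\vec{\alpha}$-tree if and only if either $st(T)\sqsubseteq st(S)\in T$ or $st(S)\sqsubseteq st(T)\in S$.
   Context: Setting (Alpha-Theory of Benci–Di Nasso): ZFC together with a new symbol $\alpha$ satisfying: ($\alpha$1) every sequence $\varphi=\langle\varphi_i:i\in\mathbb{N}\rangle$ has a unique ideal value $\varphi[\alpha]$; ($\alpha$2) if $\varphi[\alpha]=\psi[\alpha]$ and $f\circ\varphi$, $f\circ\psi$ make sense then $(f\circ\varphi)[\alpha]=(f\circ\psi)[\alpha]$; ($\alpha$3) constant real sequences $r$ have ideal value $r$, and $\langle i\rangle$ has ideal value $\alpha\notin\mathbb{N}$; ($\alpha$4) if $\vartheta_i=\{\varphi_i,\psi_i\}$ then $\vartheta[\alpha]=\{\varphi[\alpha],\psi[\alpha]\}$; ($\alpha$5) the constant sequence $\emptyset$ has ideal value $\emptyset$, and for nonempty $\psi_i$, $\psi[\alpha]=\{\vartheta[\alpha]:\vartheta_i\in\psi_i\ \forall i\}$. ${}^*A$ is the ideal value of the constant sequence $A$; elements of ${}^*\mathbb{N}\setminus\mathbb{N}$ are nonstandard hypernatural numbers. For finite $s,t\subseteq\mathbb{N}$, $s\sqsubseteq t$ means $s=\{j\in t:j\le i\}$ for some $i$. A tree on $\mathbb{N}$ is a nonempty $T\subseteq[\mathbb{N}]^{<\infty}$ closed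 under $\sqsubseteq$-initial segments; stem $st(T)$ = $\sqsubseteq$-maximal $s\in T$ comparable with all elements of $T$ (if it exists); $T/s=\{t\in T:s\sqsubseteq t\}$. An $\vec{\alpha}$-tree is a tree $T$ with a stem, $T/st(T)\neq\emptyset$, and $s\cup\{\alpha_s\}\in{}^*T$ for all $s\in T/st(T)$. *)

From mathcomp Require Import all_boot finmap.
Set Implicit Arguments. Unset Strict Implicit. Unset Printing Implicit Defensive.
Local Open Scope fset_scope.

Definition finset_nat := {fset nat}.

Definition fsfamily := finset_nat -> Prop.

(* s ⊑ t : s is an initial segment of t, i.e. s = {j in t | j < i} for some i.
   (We use "< i" so that the empty set is an initial segment of every t.) *)
Definition initseg (s t : finset_nat) : Prop :=
  exists i : nat, s = [fset j in t | j < i].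

Definition comparable (s t : finset_nat) : Prop := initseg s t \/ initseg t s.

Definition is_tree (T : fsfamily) : Prop :=
  (exists t, T t) /\ (forall s t, T t -> initseg s t -> T s).

Definition is_stem (T : fsfamily) (s : finset_nat) : Prop :=
  T s /\ (forall t, T t -> comparable s t) /\
  (forall s', T s' -> (forall t, T t -> comparable s' t) -> initseg s s' -> s' = s).

Definition tree_above (T : fsfamily) (s : finset_nat) : fsfamily :=
  fun t => T t /\ initseg s t.

Definition fam_inter (S T : fsfamily) : fsfamily := fun t => S t /\ T t.

(* Semantics of Alpha-Theory: the ideal-value map is the ultrapower modulo the
   nonprincipal ultrafilter U = {A ⊆ N | alpha ∈ *A}. *)
Definition is_nonprincipal_ultrafilter (U : (nat -> Prop) -> Prop) : Prop :=
  U (fun _ => True) /\ ~ U (fun _ => False) /\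
  (forall A B : nat -> Prop, U A -> (forall i, A i -> B i) -> U B) /\
  (forall A B : nat -> Prop, U A -> U B -> U (fun i => A i /\ B i)) /\
  (forall A : nat -> Prop, U A \/ U (fun i => ~ A i)) /\
  (forall n : nat, ~ U (fun i => i = n)).

(* A hypernatural number is represented by a sequence x : nat -> nat (its ideal
   value x[alpha]); it is nonstandard iff it differs from each standard n. *)
Definition nonstandard (U : (nat -> Prop) -> Prop) (x : nat -> nat) : Prop :=
  forall n : nat, U (fun i => x i <> n).

(* s ∪ {x[alpha]} ∈ *T, for standard s and hypernatural x: the ideal value of the
   sequence i |-> s ∪ {x i} belongs to *T. *)
Definition in_star_ext (U : (nat -> Prop) -> Prop) (T : fsfamily)
    (s : finset_nat) (x : nat -> nat) : Prop :=
  U (fun i => T (s `|` [fset x i])).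

Definition is_alpha_tree (U : (nat -> Prop) -> Prop)
    (alphas : finset_nat -> nat -> nat) (T : fsfamily) : Prop :=
  is_tree T /\
  exists st, is_stem T st /\ (exists t, tree_above T st t) /\
    (forall s, tree_above T st s -> in_star_ext U T s (alphas s)).

(* If the stem of S lies below that of T inside T, the stem of S is also the stem
   of S ∩ T: a node above it is comparable with s ∪ {α_s[i]} for large i, and
   such nodes cannot sit above s ∪ {α_s[i]} since α_s is nonstandard.
   Conversely, each stem lies below any node r whose α-successor r ∪ {α_r} is
   (nonstandardly) in the tree, so both stems lie below the stem of S ∩ T and are
   therefore comparable; the shorter one belongs to the other tree by closure
   under initial segments. *)
From Pilot Require Import Defs.
From mathcomp Require Import all_boot finmap.
From Stdlib Require Import Classical FunctionalExtensionality PropExtensionality.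
Set Implicit Arguments. Unset Strict Implicit. Unset Printing Implicit Defensive.
Local Open Scope fset_scope.

Lemma in_initseg_fset (t : finset_nat) i j :
  (j \in [fset j in t | j < i]) = (j \in t) && (j < i).
Proof. by rewrite !(in_fset, inE). Qed.

Lemma initseg_sub s t j : initseg s t -> j \in s -> j \in t.
Proof. by case=> i ->; rewrite in_initseg_fset => /andP []. Qed.

Lemma initseg_refl s : initseg s s.
Proof.
exists (\max_(k <- s) k).+1; apply/fsetP => j; rewrite in_initseg_fset.
by case sj: (j \in s); rewrite //= ltnS leq_bigmax_seq.
Qed.

Lemma initseg_trans s t u : initseg s t -> initseg t u -> initseg s u.
Proof.
case=> i -> [k ->]; exists (minn i k); apply/fsetP => j.
by rewrite !in_initseg_fset leq_min -andbA (andbC (j < k)).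
Qed.

Lemma initseg_anti s t : initseg s t -> initseg t s -> s = t.
Proof.
by move=> st ts; apply/fsetP => j; apply/idP/idP; apply: initseg_sub.
Qed.

Lemma initseg_fset_leq (t : finset_nat) i k :
  i <= k -> initseg [fset j in t | j < i] [fset j in t | j < k].
Proof.
move=> ik; exists i; apply/fsetP => j; rewrite !in_initseg_fset -andbA.
by case ji: (j < i); rewrite ?andbF // (leq_trans ji ik).
Qed.

Lemma initseg_comparable a b t : initseg a t -> initseg b t -> Defs.comparable a b.
Proof.
case=> i -> [k ->]; case: (leqP i k) => [ik|/ltnW ki].
- by left; apply: initseg_fset_leq.
- by right; apply: initseg_fset_leq.
Qed.

Lemma initseg_setU1_notin a s x :
  initseg a (s `|` [fset x]) -> x \notin a -> initseg a s.
Proof.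
case=> i ->; rewrite in_initseg_fset !inE eqxx orbT /= => xi.
exists i; apply/fsetP => j; rewrite !in_initseg_fset !inE.
by case: eqP => [->|_]; rewrite ?orbF // (negbTE xi) !andbF.
Qed.

Lemma stem_uniq (X : fsfamily) a b : is_stem X a -> is_stem X b -> a = b.
Proof.
move=> [Xa [acomp amax]] [Xb [bcomp bmax]].
by case: (acomp b Xb) => [/amax|/bmax] ->.
Qed.

Section NonprincipalUltrafilter.
Variable U : (nat -> Prop) -> Prop.
Hypothesis hU : is_nonprincipal_ultrafilter U.

Lemma filterS (A B : nat -> Prop) : (forall i, A i -> B i) -> U A -> U B.
Proof. by case: hU => [_ [_ [hS _]]] AB UA; apply: hS AB. Qed.

Lemma filterI (A B : nat -> Prop) : U A -> U B -> U (fun i => A i /\ B i).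
Proof. by case: hU => [_ [_ [_ [hI _]]]]; apply: hI. Qed.

Lemma filter_ex (A : nat -> Prop) : U A -> exists i, A i.
Proof.
move=> UA; apply: NNPP => noA; case: hU => [_ [hF _]]; apply: hF.
by apply: filterS UA => i Ai; apply: noA; exists i.
Qed.

Lemma nonstandard_gt b m : nonstandard U b -> U (fun i => m < b i).
Proof.
move=> bns; elim: m => [|m IHm].
  by apply: filterS (bns 0) => i; rewrite lt0n => /eqP.
apply: filterS (filterI IHm (bns m.+1)) => i [mb bm].
by rewrite ltn_neqAle mb eq_sym andbT; apply/eqP.
Qed.

Lemma nonstandard_gt_fset b (s : finset_nat) :
  nonstandard U b -> U (fun i => forall j, j \in s -> j < b i).
Proof.
move=> bns; apply: filterS (nonstandard_gt (\max_(k <- s) k) bns) => i sb j js.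
exact: leq_ltn_trans (leq_bigmax_seq _ js isT) sb.
Qed.

Lemma initseg_of_nonstandard_successors (X : fsfamily) a r b :
  nonstandard U b -> (forall t, X t -> Defs.comparable a t) ->
  U (fun i => X (r `|` [fset b i])) -> initseg a r.
Proof.
move=> bns acomp Xsucc.
have [i [ab Xri]] := filter_ex (filterI (nonstandard_gt_fset a bns) Xsucc).
case: (acomp _ Xri) => [ar|ra].
  by apply: initseg_setU1_notin ar _; apply/negP => /ab; rewrite ltnn.
have bi_succ : b i \in r `|` [fset b i] by rewrite !inE eqxx orbT.
by have /ab := initseg_sub ra bi_succ; rewrite ltnn.
Qed.

Variable alphas : finset_nat -> nat -> nat.
Hypothesis halphas : forall s, nonstandard U (alphas s).

Lemma alpha_treeP (X : fsfamily) st :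
  is_alpha_tree U alphas X -> is_stem X st ->
  is_tree X /\ forall s, tree_above X st s -> in_star_ext U X s (alphas s).
Proof. by move=> [Xtree [st' [st'X [_ Xalpha]]]] stX; rewrite -(stem_uniq st'X stX). Qed.

Lemma alpha_tree_inter (S T : fsfamily) stS stT :
  is_alpha_tree U alphas S -> is_alpha_tree U alphas T ->
  is_stem S stS -> is_stem T stT ->
  initseg stT stS -> T stS -> is_alpha_tree U alphas (fam_inter S T).
Proof.
move=> Salpha Talpha stSS stTT stTS TstS.
have [[_ Sclosed] Ssucc] := alpha_treeP Salpha stSS.
have [[_ Tclosed] Tsucc] := alpha_treeP Talpha stTT.
have [SstS [stScomp _]] := stSS.
have STsucc s : tree_above (fam_inter S T) stS s ->
    in_star_ext U (fam_inter S T) s (alphas s).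
  move=> [[Ss Ts] stSs]; apply: filterI; first exact: Ssucc.
  by apply: Tsucc; split => //; apply: initseg_trans stTS stSs.
have STstS : tree_above (fam_inter S T) stS stS by split; last exact: initseg_refl.
split; first split.
- by exists stS; case: STstS.
- by move=> s t [St Tt] st; split; [apply: Sclosed St st|apply: Tclosed Tt st].
exists stS; split; last by split; [exists stS|].
split; first by case: STstS.
split; first by move=> t [St _]; apply: stScomp.
move=> s' _ s'comp stSs'; apply: initseg_anti _ stSs'.
exact: initseg_of_nonstandard_successors (halphas stS) s'comp (STsucc _ STstS).
Qed.

Lemma stems_below_inter_stem (S T : fsfamily) stS stT :
  is_alpha_tree U alphas (fam_inter S T) -> is_stem S stS -> is_stem T stT ->
  exists2 r, S r /\ T r & initseg stS r /\ initseg stT r.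
Proof.
move=> [_ [r [[[Sr Tr] _] [_ STsucc]]]] [_ [stScomp _]] [_ [stTcomp _]].
have rsucc := STsucc r (conj (conj Sr Tr) (initseg_refl r)).
exists r => //; split.
- by apply: initseg_of_nonstandard_successors (halphas r) stScomp _;
    apply: filterS rsucc => i [].
- by apply: initseg_of_nonstandard_successors (halphas r) stTcomp _;
    apply: filterS rsucc => i [].
Qed.

End NonprincipalUltrafilter.

Lemma fam_interC (S T : fsfamily) : fam_inter S T = fam_inter T S.
Proof.
apply: functional_extensionality => t; apply: propositional_extensionality.
by split=> [[]|[]].
Qed.

Theorem mainTheorem16 (U : (nat -> Prop) -> Prop)
  (hU : is_nonprincipal_ultrafilter U)
  (alphas : finset_nat -> nat -> nat)
  (halphas : forall s, nonstandard U (alphas s))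
  (S T : fsfamily) (hS : is_alpha_tree U alphas S) (hT : is_alpha_tree U alphas T)
  (stS stT : finset_nat) (hstS : is_stem S stS) (hstT : is_stem T stT) :
  is_alpha_tree U alphas (fam_inter S T) <->
  ((initseg stT stS /\ T stS) \/ (initseg stS stT /\ S stT)).
Proof.
split=> [STalpha|[[stTS TstS]|[stST SstT]]].
- have [r [Sr Tr] [stSr stTr]] := stems_below_inter_stem hU halphas STalpha hstS hstT.
  have [[_ Sclosed] _] := alpha_treeP hS hstS.
  have [[_ Tclosed] _] := alpha_treeP hT hstT.
  case: (initseg_comparable stSr stTr) => [stST|stTS].
    by right; split; last exact: Sclosed Sr stTr.
  by left; split; last exact: Tclosed Tr stSr.
- exact: (alpha_tree_inter hU halphas hS hT hstS hstT stTS TstS).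
- rewrite fam_interC.
  exact: (alpha_tree_inter hU halphas hT hS hstT hstS stST SstT).
Qed.
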